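(* Let $\mathbf v=(v_1,\dots,v_m)$ and $\mathbf k=(k_1,\dots,k_m)$ be $m$-tuples of positive integers with $k_i\le v_i$ for all $i$ and $\sum_i k_i\ge 2$. Then \[ C(\mathbf v,\mathbf k,2)\ \ge\ \max_{\substack{1\le i\le m\\ k_i\neq 1}} C(v_i,k_i,2). \]
   Context: Let $X_1,\dots,X_m$ be pairwise disjoint sets with $|X_i|=v_i$. A block is an $m$-tuple $(B_1,\dots,B_m)$ with $B_i\subseteq X_i$, $|B_i|=k_i$. An $m$-tuple of sets $(T_1,\dots,T_m)$ is $(\mathbf v,\mathbf k,2)$-admissible if $T_i\subseteq X_i$, $|T_i|\le k_i$ and $\sum|T_i|=2$; it is contained in a block if $T_i\subseteq B_i$ for all $i$. A ${\rm GC}(\mathbf v,\mathbf k,2)$ is a finite family (repetitions allowed) of blocks containing every admissible tuple in at least one block; $C(\mathbf v,\mathbf k,2)$ is the minimum number of blocks. For integers $v\ge k\ge 2$, $C(v,k,2)$ is the ordinary covering number: the minimum number of $k$-subsets of a $v$-set such that every $2$-subset is contained in at least one of them. *)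

From Stdlib Require Import ClassicalEpsilon.
From mathcomp Require Import all_boot.
Set Implicit Arguments. Unset Strict Implicit. Unset Printing Implicit Defensive.

(* Minimum of a set of naturals (chosen classically); meaningful when the set is nonempty. *)
Definition min_nat (P : nat -> Prop) : nat :=
  epsilon (inhabits 0) (fun n => P n /\ forall n', P n' -> n <= n').

(* Ground set X_i is modelled by 'I_(v i); the X_i are disjoint by construction
   (a tuple (T_1,...,T_m) has T_i a subset of 'I_(v i)). *)
Definition mtuple (m : nat) (v : 'I_m -> nat) : Type :=
  forall i : 'I_m, {set 'I_(v i)}.

Definition is_block m (v k : 'I_m -> nat) (B : mtuple v) : Prop :=
  forall i, #|B i| = k i.

Definition admissible2 m (v k : 'I_m -> nat) (T : mtuple v) : Prop :=
  (forall i, #|T i| <= k i) /\ \sum_(i < m) #|T i| = 2.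

Definition contained m (v : 'I_m -> nat) (T B : mtuple v) : Prop :=
  forall i, T i \subset B i.

(* A GC(v,k,2) with b blocks (a family indexed by 'I_b, repetitions allowed). *)
Definition is_GC m (v k : 'I_m -> nat) (b : nat) (F : 'I_b -> mtuple v) : Prop :=
  (forall j, is_block k (F j)) /\
  (forall T : mtuple v, admissible2 k T -> exists j, contained T (F j)).

Definition C_GC m (v k : 'I_m -> nat) : nat :=
  min_nat (fun b => exists F : 'I_b -> mtuple v, is_GC k F).

Definition is_covering (v k b : nat) (F : 'I_b -> {set 'I_v}) : Prop :=
  (forall j, #|F j| = k) /\
  (forall P : {set 'I_v}, #|P| = 2 -> exists j, P \subset F j).

Definition C_cov (v k : nat) : nat :=
  min_nat (fun b => exists F : 'I_b -> {set 'I_v}, is_covering k F).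

(* When k_i >= 2, a pair P in X_i, placed in coordinate i with empty sets
   elsewhere, is an admissible tuple; so the i-th components of the blocks of
   any GC(v,k,2) form an ordinary covering of X_i.  Applied to a minimum GC --
   one exists, since the family of all blocks is a GC -- this gives
   C(v_i,k_i,2) <= C(v,k,2). *)
From Stdlib Require Import ClassicalEpsilon.
From mathcomp Require Import all_boot.

Set Implicit Arguments.
Unset Strict Implicit.
Unset Printing Implicit Defensive.

Lemma min_nat_spec (P : nat -> Prop) n : P n ->
  P (min_nat P) /\ forall n', P n' -> min_nat P <= n'.
Proof.
move=> Pn; apply: (epsilon_spec (inhabits 0) (fun n => P n /\ forall n', P n' -> n <= n')).
pose Pb n := if excluded_middle_informative (P n) then true else false.
have PbP n' : reflect (P n') (Pb n').
  by rewrite /Pb; case: excluded_middle_informative => ?; constructor.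
have [n0 /PbP Pn0 n0_min] := ex_minnP (ex_intro Pb n (introT (PbP n) Pn)).
by exists n0; split=> // n' /PbP; apply: n0_min.
Qed.

Lemma min_natP (P : nat -> Prop) n : P n -> P (min_nat P).
Proof. by case/min_nat_spec. Qed.

Lemma min_nat_le (P : nat -> Prop) n : P n -> min_nat P <= n.
Proof. by move=> Pn; apply: (min_nat_spec Pn).2. Qed.

Lemma exists_superset_card (T : finType) (A : {set T}) n :
  #|A| <= n <= #|T| -> exists2 S : {set T}, A \subset S & #|S| = n.
Proof.
case/andP=> An nT.
have : n - #|A| <= #|~: A| by rewrite leq_subLR cardsC.
case/card_geqP=> s [s_uniq s_size sA].
exists (A :|: [set:: s]); first exact: subsetUl.
have AsI0 : A :&: [set:: s] = set0.
  by apply/setP=> x; rewrite !inE; apply/andP=> -[xA /sA]; rewrite inE xA.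
have := cardsUI A [set:: s]; rewrite AsI0 cards0 addn0 => ->.
have -> : #|[set:: s]| = size s.
  by rewrite -(card_uniqP s_uniq); apply: eq_card => x; rewrite inE.
by rewrite s_size subnKC.
Qed.

Section BlockCovering.

Variables (m : nat) (v k : 'I_m -> nat).
Hypothesis k_le_v : forall i, k i <= v i.

Lemma admissible_in_block (T : mtuple v) : admissible2 k T ->
  exists2 B : mtuple v, is_block k B & contained T B.
Proof.
case=> T_le_k _.
have /fin_all_exists2[B TB cardB] i :
    exists2 S : {set 'I_(v i)}, T i \subset S & #|S| = k i.
  by apply: exists_superset_card; rewrite T_le_k card_ord k_le_v.
by exists B.
Qed.

Lemma exists_GC : exists b (F : 'I_b -> mtuple v), is_GC k F.
Proof.
pose DT := {dffun forall i, {set 'I_(v i)}}.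
pose blocks := [set B : DT | [forall i, #|B i| == k i]].
exists #|blocks|, (fun j => (enum_val j : DT)); split.
  by move=> j i; have := enum_valP j; rewrite inE => /forallP/(_ i)/eqP.
move=> T /admissible_in_block[B Bblock TB].
pose B' : DT := [ffun i => B i].
have B'blocks : B' \in blocks.
  by rewrite inE; apply/forallP=> i; rewrite ffunE Bblock.
exists (enum_rank_in B'blocks B') => i.
by rewrite enum_rankK_in // ffunE.
Qed.

End BlockCovering.

(* The coordinates live in different types 'I_(v i'), so P is transported to
   coordinate i' = i through the values of its elements. *)
Definition tuple_at m (v : 'I_m -> nat) (i : 'I_m) (P : {set 'I_(v i)}) : mtuple v :=
  fun i' => [set y | (i' == i) && [exists z in P, val z == val y]].

Lemma tuple_at_id m (v : 'I_m -> nat) i (P : {set 'I_(v i)}) : tuple_at P i = P.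
Proof.
apply/setP=> y; rewrite inE eqxx /=.
apply/existsP/idP => [[z /andP[zP /eqP/val_inj <-]] // | yP].
by exists y; rewrite yP eqxx.
Qed.

Lemma tuple_at_ne m (v : 'I_m -> nat) i (P : {set 'I_(v i)}) i' :
  i' != i -> tuple_at P i' = set0.
Proof. by move=> /negbTE ne; apply/setP=> y; rewrite !inE ne. Qed.

Lemma admissible_tuple_at m (v k : 'I_m -> nat) i (P : {set 'I_(v i)}) :
  #|P| = 2 -> 2 <= k i -> admissible2 k (tuple_at P).
Proof.
move=> cardP k_ge2; split=> [i'|].
  by case: (eqVneq i' i) => [->|ne]; rewrite ?tuple_at_id ?cardP ?tuple_at_ne ?cards0.
rewrite (bigD1 i) //= tuple_at_id cardP big1 ?addn0 // => i' ne.
by rewrite tuple_at_ne ?cards0.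
Qed.

Lemma GC_component_covering m (v k : 'I_m -> nat) b (F : 'I_b -> mtuple v) i :
  is_GC k F -> 2 <= k i -> is_covering (k i) (fun j => F j i).
Proof.
case=> Fblock Fcover k_ge2; split=> [j|P cardP]; first exact: Fblock.
have [j PFj] := Fcover _ (admissible_tuple_at cardP k_ge2).
by exists j; rewrite -(tuple_at_id P); apply: PFj.
Qed.

Lemma C_cov_le_C_GC m (v k : 'I_m -> nat) i :
  (forall i, k i <= v i) -> 2 <= k i -> C_cov (v i) (k i) <= C_GC v k.
Proof.
move=> k_le_v k_ge2; have [b [F GC_F]] := exists_GC k_le_v.
have [F0 GC_F0] : exists F0 : 'I_(C_GC v k) -> mtuple v, is_GC k F0.
  exact: (min_natP (P := fun b => exists F : 'I_b -> mtuple v, is_GC k F) (ex_intro _ F GC_F)).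
apply: (min_nat_le (P := fun b => exists G : 'I_b -> {set 'I_(v i)}, is_covering (k i) G)).
by exists (fun j => F0 j i); apply: GC_component_covering.
Qed.

Theorem corollary3p10 (m : nat) (v k : 'I_m -> nat)
  (hv : forall i, 0 < v i) (hk : forall i, 0 < k i)
  (hkv : forall i, k i <= v i) (hsum : 2 <= \sum_(i < m) k i) :
  \max_(i < m | k i != 1) C_cov (v i) (k i) <= C_GC v k.
Proof.
apply/bigmax_leqP=> i k_neq1; apply: C_cov_le_C_GC => //.
by move: (hk i) k_neq1; case: (k i) => [|[]].
Qed.
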